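(* Let $n,m$ be positive integers and let $\mathbb P$ be one of the distributions $x_m,x^*_m,x^+_m$ on $S_n$. Then $\mathrm{sep}(\mathbb P)=\max\{1-n!\,\mathbb P(0),\,1-n!\,\mathbb P(k_{\max})\}$ and $\|\mathbb P-U\|_\infty=\max\{|1-n!\,\mathbb P(0)|,\,|1-n!\,\mathbb P(k_{\max})|\}$, where $k_{\max}=\lfloor n/2\rfloor$, $\lfloor (n-1)/2\rfloor$, $n-1$ for $x_m$, $x^*_m$, $x^+_m$ respectively.
   Context: For $\pi\in S_n$: $\mathrm{des}(\pi)=|\{i:\pi(i)>\pi(i+1)\}|$; $\mathrm{pk}(\pi)=|\{2\le i\le n-1:\pi(i-1)<\pi(i)>\pi(i+1)\}|$; $\mathrm{lpk}(\pi)$ is the number of peaks with the convention $\pi(0)=0$. Integers are written with $\bar i=-i$, ordered $0<_{\mathbb Z}\bar1<_{\mathbb Z}1<_{\mathbb Z}\bar2<2<\cdots$, $|\bar j|=j$; $a\prec_+b$ means $a<_{\mathbb Z}b$ or $a=b\in\{0,1,\ldots\}$; $a\prec_-b$ means $a<_{\mathbb Z}b$ or $a=b\in\{\bar1,\bar2,\ldots\}$. A $\pi$-partition is $f:[n]\to\mathbb Z$ with, for $1\le i<n$, $f(\pi(i))\prec_+f(\pi(i+1))$ if $\pi(i)<\pi(i+1)$, $f(\pi(i))\prec_-f(\pi(i+1))$ if $\pi(i)>\pi(i+1)$. $\Omega_\pi(m)$ counts $\pi$-partitions with $|f(i)|\le m$; $\Omega^*_\pi(m)$ those also never $0$; $\Omega^+_\pi(m)$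 those with values in $\{1,\ldots,m\}$. The distributions are $x_m(\pi)=\Omega_\pi(m)/(2m+1)^n$, $x^*_m(\pi)=\Omega^*_\pi(m)/(2m)^n$, $x^+_m(\pi)=\Omega^+_\pi(m)/m^n$ (the lazy, standard and strict $m$-shelf shuffling distributions). It is known that $x_m(\pi)$ depends only on $\mathrm{lpk}(\pi)$, $x^*_m(\pi)$ only on $\mathrm{pk}(\pi)$, $x^+_m(\pi)$ only on $\mathrm{des}(\pi)$; for $\mathbb P=x_m$ (resp. $x^*_m$, $x^+_m$), $\mathbb P(k)$ denotes the common value on permutations with $\mathrm{lpk}=k$ (resp. $\mathrm{pk}=k$, $\mathrm{des}=k$). $U$ is the uniform distribution on $S_n$; $\mathrm{sep}(\mathbb P)=\max_{\pi}(1-n!\mathbb P(\pi))$ and $\|\mathbb P-U\|_\infty=\max_\pi|1-n!\mathbb P(\pi)|$. *)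

From HB Require Import structures.
From mathcomp Require Import all_boot all_order all_algebra all_fingroup.
Set Implicit Arguments. Unset Strict Implicit. Unset Printing Implicit Defensive.
Import Order.TTheory GRing.Theory Num.Theory.

(* Permutations pi in S_n are s : 'S_n (acting on {0..n-1}); we use the
   1-indexed view pv s i = s(i-1)+1 for 1 <= i <= n, and pv s 0 = 0
   (the convention pi(0) = 0 used for left peaks). *)
Definition pv (n : nat) (s : 'S_n) (i : nat) : nat :=
  if i is i'.+1 then (if insub i' is Some j then (s j).+1 else 0) else 0.

Definition des (n : nat) (s : 'S_n) : nat :=
  count (fun i => pv s (i.+1) < pv s i) (iota 1 n.-1).

Definition pk (n : nat) (s : 'S_n) : nat :=
  count (fun i => (pv s i.-1 < pv s i) && (pv s i.+1 < pv s i)) (iota 2 (n - 2)).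

Definition lpk (n : nat) (s : 'S_n) : nat :=
  count (fun i => (pv s i.-1 < pv s i) && (pv s i.+1 < pv s i)) (iota 1 n.-1).

(* The total order 0 < -1 < 1 < -2 < 2 < ... on Z, via a rank into nat. *)
Definition zrank (z : int) : nat :=
  if (0 <= z)%R then (absz z).*2 else (absz z).*2.-1.

Definition zlt (a b : int) : bool := zrank a < zrank b.

Definition prec_plus (a b : int) : bool := zlt a b || ((a == b) && (0 <= a)%R).
Definition prec_minus (a b : int) : bool := zlt a b || ((a == b) && (a < 0)%R).

(* f : [n] -> Z is a pi-partition (positions and values shifted to 0-indexing). *)
Definition is_ppart (n : nat) (s : 'S_n) (f : 'I_n -> int) : bool :=
  [forall i : 'I_n, forall j : 'I_n, (j == i.+1 :> nat) ==>
    (if (s i : nat) < s j then prec_plus (f (s i)) (f (s j))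
     else prec_minus (f (s i)) (f (s j)))].

Definition dec (m : nat) (k : 'I_(2 * m + 1)) : int := (k : nat)%:Z - m%:Z.

(* number of pi-partitions f with |f(i)| <= m and every value satisfying Q *)
Definition Omega_gen (Q : int -> bool) (n : nat) (s : 'S_n) (m : nat) : nat :=
  #|[set f : {ffun 'I_n -> 'I_(2 * m + 1)} |
      is_ppart s (fun i => dec (f i)) && [forall i, Q (dec (f i))]]|.

Definition Omega := Omega_gen (fun _ => true).
Definition Omega_star := Omega_gen (fun z => z != 0).
Definition Omega_plus := Omega_gen (fun z => (0 < z)%R).

Inductive shelf := Lazy | Standard | Strict.

Local Open Scope ring_scope.

Definition shuffle_dist (k : shelf) (m n : nat) (s : 'S_n) : rat :=
  match k with
  | Lazy => (Omega s m)%:R / ((2 * m + 1) ^ n)%:R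
  | Standard => (Omega_star s m)%:R / ((2 * m) ^ n)%:R
  | Strict => (Omega_plus s m)%:R / (m ^ n)%:R
  end.

Definition shelf_stat (k : shelf) (n : nat) (s : 'S_n) : nat :=
  match k with Lazy => lpk s | Standard => pk s | Strict => des s end.

Definition kmax (k : shelf) (n : nat) : nat :=
  match k with Lazy => n./2 | Standard => n.-1./2 | Strict => n.-1 end.

(* The max over the nonempty finite set 'S_n is written as a big Num.max
   seeded with the value at the identity permutation (which is in the range). *)
Definition sep (n : nat) (P : 'S_n -> rat) : rat :=
  \big[Num.max/(1 - (n`!)%:R * P 1%g)]_(s : 'S_n) (1 - (n`!)%:R * P s).

Definition dist_inf (n : nat) (P : 'S_n -> rat) : rat :=
  \big[Num.max/`|1 - (n`!)%:R * P 1%g|]_(s : 'S_n) `|1 - (n`!)%:R * P s|.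

(** Write a pi-partition [f] in the order of [pi], [z_j = f(pi(j))].  The
  absolute values [|z_j|] weakly increase, so [f] is encoded by the increments
  [d_j = |z_j| - |z_(j-1)|], of total at most [m], together with the signs of
  the [z_j]; the pi-partition condition only restricts the sign of [z_j] when
  [d_j = 0] or [d_(j+1) = 0].  Summing out the signs, [Omega_pi(m)] becomes a
  sum over increment vectors [d] of [2 ^ #{j | d_j > 0}] (lazy and standard
  shuffles) or [1] (strict shuffle), restricted to the [d] that vanish on no
  block of a family of disjoint blocks of positions: a pair of adjacent
  positions for each (left) peak, resp. a single position for each descent,
  plus the block [{0}] (i.e. [d_0 > 0]) for the standard and strict shuffles.
  There are [lpk], [pk + 1], resp. [des + 1] blocks, all of the same shape
  apart from [{0}], so relabelling positions carries the first blocks of the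
  family of a permutation with a larger statistic onto the blocks of one with
  a smaller statistic: [Omega_pi(m)], hence [P(pi)], decreases with the
  statistic.  Disjointness of the blocks also shows that the statistic never
  exceeds [k_max].  Hence [1 - n! P(pi)] lies
  between its values at statistic [0] and [k_max], and both maxima are
  attained at these endpoints. *)

From mathcomp Require Import all_boot all_order all_algebra all_fingroup.
From mathcomp Require Import zify.
Import Order.TTheory GRing.Theory Num.Theory.
Set Implicit Arguments. Unset Strict Implicit. Unset Printing Implicit Defensive.

Definition signed (neg : bool) (a : nat) : int := (if neg then - a%:Z else a%:Z)%R.

Lemma signed_eq0 neg a : (signed neg a == Posz 0) = (a == 0).
Proof. by rewrite /signed; case: neg; lia. Qed.

Lemma zrank_natz a : zrank a%:Z = a.*2.
Proof. by rewrite /zrank lez_nat leq0n. Qed.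

Lemma zrank_oppz a : 0 < a -> zrank (- a%:Z)%R = a.*2.-1.
Proof. by move=> a_gt0; rewrite /zrank oppr_ge0 lez_nat leqNgt a_gt0 abszN. Qed.

Lemma prec_signed (up neg neg' : bool) (a a' : nat) :
  a <= a' -> (neg -> 0 < a) -> (neg' -> 0 < a') ->
  (if up then prec_plus (signed neg a) (signed neg' a')
   else prec_minus (signed neg a) (signed neg' a'))
  = (a < a') || (if up then ~~ neg' else neg).
Proof.
move=> le_aa' a_gt0 a'_gt0; rewrite /prec_plus /prec_minus /zlt /signed.
case: neg a_gt0 => a_gt0; case: neg' a'_gt0 => a'_gt0; case: up;
  rewrite ?zrank_oppz ?zrank_natz ?a_gt0 ?a'_gt0 //
          ?eqr_opp ?eqz_nat ?oppr_ge0 ?lez_nat ?oppr_lt0 ?ltz_nat;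
  try have := a_gt0 isT; try have := a'_gt0 isT; move: le_aa'; lia.
Qed.

Lemma absz_le_prec (a b : int) :
  prec_plus a b || prec_minus a b -> absz a <= absz b.
Proof.
rewrite /prec_plus /prec_minus /zlt => /orP[] /orP[|/andP[/eqP -> _]] //;
  rewrite /zrank; case: ifP; case: ifP; lia.
Qed.

Section PositionForm.
Variable n : nat.
Implicit Types (s : 'S_n) (z : 'I_n -> int).

Definition asc s (j : nat) : bool := pv s j < pv s j.+1.

Lemma pv_ord s (i : 'I_n) : pv s i.+1 = (s i).+1.
Proof. by rewrite /pv valK. Qed.

Lemma asc_ord s (i j : 'I_n) : j = i.+1 :> nat -> asc s j = (s i < s j).
Proof. by move=> ji; rewrite /asc {1}ji !pv_ord. Qed.

Lemma asc0 s : 0 < n -> asc s 0.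
Proof. by move=> n_gt0; rewrite /asc /pv /= insubT. Qed.

(* [z i] is the value at position [i], i.e. [f (s i)]; since [pv] is 1-based,
   the step from position [i] to [j = i.+1] is an ascent iff [asc s j]. *)
Definition is_ppart_pos s z : bool :=
  [forall i : 'I_n, forall j : 'I_n, (j == i.+1 :> nat) ==>
    (if asc s j then prec_plus (z i) (z j) else prec_minus (z i) (z j))].

Lemma eq_is_ppart_pos s z1 z2 : z1 =1 z2 -> is_ppart_pos s z1 = is_ppart_pos s z2.
Proof.
by move=> z12; apply: eq_forallb => i; apply: eq_forallb => j; rewrite !z12.
Qed.

Lemma is_ppartE s (f : 'I_n -> int) : is_ppart s f = is_ppart_pos s (fun i => f (s i)).
Proof.
apply: eq_forallb => i; apply: eq_forallb => j.
by case: eqP => //= ji; rewrite (asc_ord s ji).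
Qed.

Definition ppart_pos (Q : int -> bool) s m :=
  [set h : {ffun 'I_n -> 'I_(2 * m + 1)} |
     is_ppart_pos s (fun i => dec (h i)) && [forall i, Q (dec (h i))]].

Lemma Omega_gen_pos Q s m : Omega_gen Q s m = #|ppart_pos Q s m|.
Proof.
pose g (f : {ffun 'I_n -> 'I_(2 * m + 1)}) := [ffun i => f (s i)].
have g_inj : injective g.
  by move=> f1 f2 /ffunP g12; apply/ffunP => x; have := g12 (s^-1 x)%g; rewrite !ffunE permKV.
rewrite -(card_preimset _ g_inj); apply: eq_card => f; rewrite !inE is_ppartE.
rewrite (@eq_is_ppart_pos _ _ (fun i => dec (g f i))) => [|i]; last by rewrite ffunE.
congr andb; apply/forallP/forallP => Qf x; first by rewrite ffunE.
by have := Qf (s^-1 x)%g; rewrite ffunE permKV.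
Qed.

End PositionForm.

(** * Increments and signs *)

Section Increments.
Variables n m : nat.
Local Notation incrs := {ffun 'I_n -> 'I_m.+1}.
Local Notation signs := {ffun 'I_n -> bool}.
Local Notation values := {ffun 'I_n -> 'I_(2 * m + 1)}.
Implicit Types (d : incrs) (p : incrs * signs) (h : values).

Definition incr d (k : nat) : nat := oapp (fun i : 'I_n => val (d i)) 0 (insub k).

Lemma incr_ord d (i : 'I_n) : incr d i = d i.
Proof. by rewrite /incr valK. Qed.

Lemma incr_out d k : n <= k -> incr d k = 0.
Proof. by move=> le_nk; rewrite /incr insubF // ltnNge le_nk. Qed.

Definition psum d (j : nat) : nat := \sum_(i < j.+1) incr d i.

Lemma psum0 d : psum d 0 = incr d 0.
Proof. by rewrite /psum big_ord_recr big_ord0. Qed.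

Lemma psumS d j : psum d j.+1 = psum d j + incr d j.+1.
Proof. by rewrite /psum big_ord_recr. Qed.

Lemma leq_psum d : {homo psum d : i j / i <= j}.
Proof.
move=> i j; elim: j => [|j IHj]; first by rewrite leqn0 => /eqP ->.
rewrite leq_eqVlt ltnS => /predU1P[-> // | /IHj le_ij].
by rewrite psumS (leq_trans le_ij) ?leq_addr.
Qed.

Lemma incr_le_psum d j : incr d j <= psum d j.
Proof. by case: j => [|j]; rewrite ?psum0 // psumS leq_addl. Qed.

Lemma psum_out d j : n <= j -> psum d j = psum d n.-1.
Proof.
elim: j => [|j IHj] le_nj; first by have -> : n.-1 = 0 by lia.
rewrite leq_eqVlt in le_nj; case/orP: le_nj => [/eqP n_eq | lt_nj].
  by rewrite n_eq /= psumS incr_out ?addn0 // n_eq.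
by rewrite psumS incr_out ?addn0 ?IHj //; lia.
Qed.

Lemma sum_incrs d : \sum_(i < n) (d i : nat) = psum d n.-1.
Proof.
rewrite -(psum_out d (leqnn n)) /psum big_ord_recr /= incr_out // addn0.
by apply: eq_bigr => i _; rewrite incr_ord.
Qed.

Lemma psum_le_sum d j : psum d j <= \sum_(i < n) (d i : nat).
Proof.
rewrite sum_incrs; case: (leqP n j) => [/(psum_out d) -> // | lt_jn].
by apply: leq_psum; lia.
Qed.

Definition signed_psum p (j : 'I_n) : int := signed (p.2 j) (psum p.1 j).

Definition admissible p : bool :=
  (\sum_(i < n) (p.1 i : nat) <= m) && [forall j, p.2 j ==> (0 < psum p.1 j)].

Fact dec_dom_gt0 : 0 < 2 * m + 1. Proof. by rewrite addn1. Qed.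

Definition encode p : values :=
  [ffun j => insubd (Ordinal dec_dom_gt0) (if p.2 j then m - psum p.1 j else m + psum p.1 j)].

Lemma val_encode p j : admissible p ->
  encode p j = (if p.2 j then m - psum p.1 j else m + psum p.1 j) :> nat.
Proof.
case/andP=> /(leq_trans (psum_le_sum p.1 j)) le_psum_m _.
by rewrite ffunE val_insubd ifT //; case: (p.2 j); lia.
Qed.

Lemma dec_encode p j : admissible p -> dec (encode p j) = signed_psum p j.
Proof.
move=> adm_p; have := psum_le_sum p.1 j; case/andP: adm_p (val_encode j adm_p) => le_sum_m _.
by rewrite /dec /signed_psum /signed => ->; case: (p.2 j); lia.
Qed.

(* [aval h k] is [|z_(k-1)|] and [aval h 0 = 0], so that the increment at
   position [j] is [aval h j.+1 - aval h j]. *)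
Definition aval h (k : nat) : nat :=
  if k is k'.+1 then oapp (fun i : 'I_n => absz (dec (h i))) 0 (insub k') else 0.

Lemma aval_ord h (i : 'I_n) : aval h i.+1 = absz (dec (h i)).
Proof. by rewrite /aval valK. Qed.

Lemma aval_le h k : aval h k <= m.
Proof.
case: k => [|k] //=; case: insubP => //= i _ _.
by rewrite /dec; have := ltn_ord (h i); lia.
Qed.

Definition decode h : incrs * signs :=
  ([ffun j : 'I_n => inord (aval h j.+1 - aval h j)], [ffun j => (dec (h j) < 0)%R]).

Lemma aval_encode p (j : nat) : admissible p -> j < n -> aval (encode p) j.+1 = psum p.1 j.
Proof.
move=> adm_p lt_jn; rewrite /aval insubT /= dec_encode // /signed_psum /signed.
by case: (p.2 _); rewrite ?abszN absz_nat.
Qed.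

Lemma incr_encode p j : admissible p -> j < n ->
  aval (encode p) j.+1 - aval (encode p) j = incr p.1 j.
Proof.
move=> adm_p lt_jn; rewrite aval_encode //.
case: j lt_jn => [|j] lt_jn; first by rewrite psum0 [aval _ 0]/= subn0.
by rewrite aval_encode 1?ltnW // psumS addKn.
Qed.

Lemma decode_encode p : admissible p -> decode (encode p) = p.
Proof.
case: p => d sg adm_p; congr pair; apply/ffunP => j; rewrite ffunE.
  by rewrite incr_encode // incr_ord inord_val.
rewrite dec_encode // /signed_psum /signed /=.
case/andP: adm_p => _ /forallP /(_ j) /=.
by case: (sg j) => //= psum_gt0; apply/idP; move: psum_gt0; lia.
Qed.

Variable s : 'S_n.

Lemma aval_mono h k : is_ppart_pos s (fun i => dec (h i)) -> k < n -> aval h k <= aval h k.+1.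
Proof.
case: k => [//|k] /forallP ph lt_kn; have lt_k'n : k < n by lia.
have -> : aval h k.+1 = absz (dec (h (Ordinal lt_k'n))) by rewrite -aval_ord.
have -> : aval h k.+2 = absz (dec (h (Ordinal lt_kn))) by rewrite -aval_ord.
apply: absz_le_prec; move/forallP/(_ (Ordinal lt_kn))/implyP/(_ (eqxx _)): (ph (Ordinal lt_k'n)).
by case: ifP => _ ->; rewrite ?orbT.
Qed.

Lemma psum_decode h j : is_ppart_pos s (fun i => dec (h i)) -> j < n ->
  psum (decode h).1 j = aval h j.+1.
Proof.
move=> ph; have incr_dec k : k < n -> incr (decode h).1 k = aval h k.+1 - aval h k.
  move=> lt_kn; rewrite /incr insubT [oapp _ _ _]/= ffunE !SubK inordK //.
  by move: (aval_le h k.+1) => /=; lia.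
elim: j => [|j IHj] lt_jn; first by rewrite psum0 incr_dec // [aval _ 0]/= subn0.
rewrite psumS IHj 1?ltnW // incr_dec //; have := aval_mono ph lt_jn; lia.
Qed.

Lemma admissible_decode h : is_ppart_pos s (fun i => dec (h i)) -> admissible (decode h).
Proof.
move=> ph; apply/andP; split.
  rewrite sum_incrs; case: (posnP n) => [n_eq0 | n_gt0].
    have -> : n.-1 = 0 by rewrite n_eq0.
    by rewrite psum0 incr_out // n_eq0.
  by rewrite psum_decode ?aval_le // prednK.
by apply/forallP => j; rewrite ffunE psum_decode // aval_ord; apply/implyP; lia.
Qed.

Lemma encode_decode h : is_ppart_pos s (fun i => dec (h i)) -> encode (decode h) = h.
Proof.
move=> ph; apply/ffunP => j; apply: ord_inj.
rewrite val_encode ?admissible_decode // psum_decode // aval_ord ffunE /dec.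
by have := ltn_ord (h j); move: (nat_of_ord (h j)) => k; case: ifP; lia.
Qed.

Lemma card_ppart_pos Q : #|ppart_pos Q s m| =
  \sum_(p : incrs * signs)
     (admissible p && is_ppart_pos s (signed_psum p) && [forall j, Q (signed_psum p j)]).
Proof.
have -> : ppart_pos Q s m = encode @: [set p | admissible p && (encode p \in ppart_pos Q s m)].
  apply/setP => h; apply/idP/imsetP => [h_in | [p]]; last first.
    by rewrite inE => /andP[_ ?] ->.
  have ph : is_ppart_pos s (fun i => dec (h i)) by move: h_in; rewrite inE => /andP[].
  by exists (decode h); rewrite ?encode_decode // inE admissible_decode ?encode_decode.
rewrite card_in_imset => [|p q]; last first.
  rewrite !inE => /andP[adm_p _] /andP[adm_q _] epq.
  by rewrite -(decode_encode adm_p) -(decode_encode adm_q) epq.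
rewrite -sum1_card big_mkcond /=; apply: eq_bigr => p _.
rewrite !inE; case adm_p: (admissible p) => //=.
rewrite (@eq_is_ppart_pos _ _ _ (signed_psum p)) => [|j]; last by rewrite dec_encode.
rewrite (eq_forallb (P2 := fun j => Q (signed_psum p j))) => [|j]; last by rewrite dec_encode.
by case: (_ && _).
Qed.

End Increments.

(** * Summing out the signs *)

Lemma prod_nat_of_bool (I : finType) (P : pred I) : \prod_(i : I) (P i : nat) = [forall i, P i].
Proof.
have [/forallP P_all | /forallPn[i /negbTE Pi]] := boolP [forall i, P i].
  by rewrite big1 // => i _; rewrite P_all.
by rewrite (bigD1 i) //= Pi.
Qed.

Section SignCount.
Variables (n m : nat) (s : 'S_n).
Local Notation incrs := {ffun 'I_n -> 'I_m.+1}.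
Local Notation signs := {ffun 'I_n -> bool}.
Implicit Types (d : incrs) (sg : signs).

(* When [|z_(j-1)| = |z_j|], the ascent condition [z_(j-1) <+ z_j] forces
   [z_j >= 0]; when [|z_j| = |z_(j+1)|], the descent condition
   [z_j <- z_(j+1)] forces [z_j < 0]. *)
Definition forced_nonneg d (j : nat) : bool := asc s j && (incr d j == 0).
Definition forced_neg d (j : nat) : bool :=
  (j.+1 < n) && ~~ asc s j.+1 && (incr d j.+1 == 0).

Definition sign_ok (Q : int -> bool) d (j : nat) (neg : bool) : bool :=
  [&& neg ==> (0 < psum d j), Q (signed neg (psum d j)),
      forced_nonneg d j ==> ~~ neg & forced_neg d j ==> neg].

Lemma prec_signed_psum d sg (i j : 'I_n) : j = i.+1 :> nat ->
  (forall k, sg k ==> (0 < psum d k)) ->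
  (if asc s j then prec_plus (signed_psum (d, sg) i) (signed_psum (d, sg) j)
   else prec_minus (signed_psum (d, sg) i) (signed_psum (d, sg) j))
  = (0 < incr d j) || (if asc s j then ~~ sg j else sg i).
Proof.
move=> ji sg_pos; rewrite /signed_psum /= prec_signed; first last.
- exact/implyP/sg_pos.
- exact/implyP/sg_pos.
- by apply: leq_psum; rewrite ji.
by rewrite ji psumS -ji; congr orb; lia.
Qed.

Lemma is_ppart_pos_signs d sg : (forall k, sg k ==> (0 < psum d k)) ->
  is_ppart_pos s (signed_psum (d, sg)) =
  [forall j : 'I_n, (forced_nonneg d j ==> ~~ sg j) && (forced_neg d j ==> sg j)].
Proof.
move=> sg_pos; apply/forallP/forallP => [pp j | forced i].
  have step (i' j' : 'I_n) : j' = i'.+1 :> nat ->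
      (0 < incr d j') || (if asc s j' then ~~ sg j' else sg i').
    by move=> ji; rewrite -prec_signed_psum //; apply: (implyP (forallP (pp i') j')); apply/eqP.
  apply/andP; split; apply/implyP.
    case/andP=> asc_j /eqP incr_j; case: j asc_j incr_j => [[|i] lt_jn] /= asc_j incr_j.
      by apply/negP => sg0; have := sg_pos (Ordinal lt_jn); rewrite /= sg0 psum0 incr_j.
    by have := step (Ordinal (ltnW lt_jn)) (Ordinal lt_jn) erefl; rewrite /= incr_j asc_j.
  case/andP=> /andP[lt_jn desc_j] /eqP incr_j.
  by have := step j (Ordinal lt_jn) erefl; rewrite /= incr_j (negbTE desc_j).
apply/forallP => j; apply/implyP => /eqP ji; rewrite prec_signed_psum //.
case: (posnP (incr d j)) => [incr_j | //] /=.
case asc_j: (asc s j).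
  case/andP: (forced j) => /implyP nonneg_j _.
  by rewrite nonneg_j // /forced_nonneg asc_j incr_j.
case/andP: (forced i) => _ /implyP neg_i.
by rewrite neg_i // /forced_neg -ji ltn_ord asc_j incr_j.
Qed.

Variable Q : int -> bool.

Lemma admissible_ppartE d sg : \sum_(i < n) (d i : nat) <= m ->
  admissible (d, sg) && is_ppart_pos s (signed_psum (d, sg))
    && [forall j, Q (signed_psum (d, sg) j)]
  = [forall j : 'I_n, sign_ok Q d j (sg j)].
Proof.
move=> le_sum_m; rewrite /admissible le_sum_m /=.
have [sg_pos | /forallPn[j sg_j_nonpos]] := boolP [forall j, sg j ==> (0 < psum d j)]; last first.
  by symmetry; apply/forallPn; exists j; rewrite /sign_ok (negbTE sg_j_nonpos).
move/forallP: (sg_pos) => sg_pos'; rewrite is_ppart_pos_signs //=.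
apply/andP/forallP => [[/forallP forced /forallP Q_sg] j | sign_ok_all].
  by move: (forced j) (Q_sg j); rewrite /sign_ok sg_pos' => /andP[-> ->] ->.
by split; apply/forallP => j; case/and4P: (sign_ok_all j) => // _ _ -> ->.
Qed.

Lemma sum_signs d :
  \sum_(sg : signs) (admissible (d, sg) && is_ppart_pos s (signed_psum (d, sg))
                      && [forall j, Q (signed_psum (d, sg) j)])
  = (\sum_(i < n) (d i : nat) <= m) * \prod_(j < n) (sign_ok Q d j false + sign_ok Q d j true).
Proof.
have [le_sum_m | gt_sum_m] := boolP (\sum_(i < n) (d i : nat) <= m); last first.
  by rewrite mul0n big1 // => sg _; rewrite /admissible (negbTE gt_sum_m).
rewrite mul1n (eq_bigr (fun sg : signs => \prod_(j < n) (sign_ok Q d j (sg j) : nat))).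
  rewrite -(bigA_distr_bigA (fun (j : 'I_n) (b : bool) => (sign_ok Q d j b : nat))).
  by apply: eq_bigr => j _; rewrite big_bool addnC.
by move=> sg _; rewrite admissible_ppartE // prod_nat_of_bool.
Qed.

Lemma Omega_gen_prod : Omega_gen Q s m =
  \sum_(d : incrs) (\sum_(i < n) (d i : nat) <= m) *
                    \prod_(j < n) (sign_ok Q d j false + sign_ok Q d j true).
Proof.
rewrite Omega_gen_pos card_ppart_pos.
rewrite -(pair_big xpredT xpredT (fun d sg => (admissible (d, sg) &&
  is_ppart_pos s (signed_psum (d, sg)) && [forall j, Q (signed_psum (d, sg) j)] : nat))) /=.
by apply: eq_bigr => d _; rewrite sum_signs.
Qed.

End SignCount.

Lemma sum_ord_succ n (P : nat -> bool) :
  \sum_(j < n) ((j.+1 < n) && P j.+1) = \sum_(j < n) ((0 < j) && P j).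
Proof.
case: n => [|n]; first by rewrite !big_ord0.
rewrite big_ord_recr big_ord_recl /= ltnn andFb addn0 add0n.
by apply: eq_bigr => i _; rewrite /bump /= add1n ltnS ltn_ord.
Qed.

Lemma exists_asc_desc (P : nat -> bool) j : P 0 -> ~~ P j ->
  exists k, [/\ k < j, P k & ~~ P k.+1].
Proof.
move=> P0; elim: j => [|j IHj] Pj; first by rewrite P0 in Pj.
have [Pj' | /IHj[k [lt_kj Pk Pk1]]] := boolP (P j); first by exists j.
by exists k; split => //; apply: ltnW.
Qed.

Section Forced.
Variables (n m : nat) (s : 'S_n) (d : {ffun 'I_n -> 'I_m.+1}).
Local Notation fneg := (forced_neg s d).
Local Notation fnn := (forced_nonneg s d).

Definition conflict_free : bool := [forall j : 'I_n, ~~ (fneg j && fnn j)].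

Hypothesis n_gt0 : 0 < n.

(* Each zero increment forces exactly one sign: that of its own position if
   [s] ascends into it, that of the previous position otherwise. *)
Lemma sum_forced :
  \sum_(j < n) fneg j + \sum_(j < n) fnn j = \sum_(j < n) (incr d j == 0).
Proof.
rewrite (eq_bigr (fun j : 'I_n => (j.+1 < n) && (~~ asc s j.+1 && (incr d j.+1 == 0)) : nat))
  => [|j _]; last by rewrite /forced_neg andbA.
rewrite (sum_ord_succ n (fun k => ~~ asc s k && (incr d k == 0))) -big_split /=.
apply: eq_bigr => j _; rewrite /forced_nonneg.
have [-> | _] := posnP (nat_of_ord j); first by rewrite asc0.
by case: (asc s j); case: (incr d j == 0).
Qed.

Lemma prod_free_signs : \prod_(j < n) (~~ fneg j + ~~ fnn j) =
  conflict_free * 2 ^ (\sum_(j < n) (0 < d j)).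
Proof.
rewrite (eq_bigr (fun j : 'I_n => (~~ (fneg j && fnn j) : nat) * 2 ^ (~~ fneg j && ~~ fnn j)))
  => [|j _]; last by case: (fneg j); case: (fnn j).
rewrite big_split /= -expn_sum.
have -> : \prod_(j < n) (~~ (fneg j && fnn j) : nat) = conflict_free by rewrite prod_nat_of_bool.
have [/forallP cf | _] := boolP conflict_free; last by rewrite !mul0n.
congr (_ * 2 ^ _).
have one_each (j : 'I_n) : (~~ fneg j && ~~ fnn j) + fneg j + fnn j = 1.
  by move: (cf j); case: (fneg j); case: (fnn j).
have zero_or_pos : \sum_(j < n) (incr d j == 0) + \sum_(j < n) (0 < d j) = n.
  rewrite -big_split /= -[RHS](card_ord n) -sum1_card; apply: eq_bigr => j _.
  by rewrite incr_ord; case: (nat_of_ord (d j)).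
have partition :
    \sum_(j < n) (~~ fneg j && ~~ fnn j) + \sum_(j < n) fneg j + \sum_(j < n) fnn j = n.
  rewrite -!big_split /= -[RHS](card_ord n) -sum1_card.
  by apply: eq_bigr => j _; apply: one_each.
move: sum_forced partition zero_or_pos.
set free := \sum_(j < n) (~~ fneg j && ~~ fnn j).
set pos := \sum_(j < n) (0 < d j).
lia.
Qed.

Lemma zero_psum_conflict j : j < n -> psum d j = 0 -> ~~ fnn j ->
  [/\ 0 < j, fneg j.-1 & exists2 k, k < j & fneg k && fnn k].
Proof.
move=> lt_jn psum_j nfnn_j.
have incr0 i : i <= j -> incr d i = 0.
  by move=> le_ij; have := leq_psum d le_ij; have := incr_le_psum d i; lia.
have desc_j : ~~ asc s j by move: nfnn_j; rewrite /forced_nonneg incr0 // eqxx andbT.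
have [k [lt_kj asc_k desc_k1]] := exists_asc_desc (asc0 s n_gt0) desc_j.
have j_gt0 : 0 < j by case: j lt_kj {lt_jn psum_j nfnn_j incr0 desc_j}.
split=> //.
  by rewrite /forced_neg prednK // lt_jn desc_j incr0.
exists k => //; rewrite /forced_neg /forced_nonneg asc_k desc_k1 !incr0 ?eqxx ?andbT //; lia.
Qed.

Lemma prod_lazy_signs : \prod_(j < n) (~~ fneg j + ((0 < psum d j) && ~~ fnn j)) =
  conflict_free * 2 ^ (\sum_(j < n) (0 < d j)).
Proof.
rewrite -prod_free_signs.
have [zero_forced | ] := boolP [forall j : 'I_n, (psum d j == 0) ==> fnn j].
  apply: eq_bigr => j _; move/implyP: (forallP zero_forced j).
  by case: (posnP (psum d j)) => [_ /(_ isT) -> | _].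
(* Otherwise both products vanish: the left one at [j.-1], the right one at
   the conflict [k]. *)
case/forallPn => j; rewrite negb_imply => /andP[/eqP psum_j nfnn_j].
have [j_gt0 fneg_j1 [k lt_kj conflict_k]] := @zero_psum_conflict j (ltn_ord j) psum_j nfnn_j.
have lt_j1n : j.-1 < n := leq_ltn_trans (leq_pred j) (ltn_ord j).
have lt_kn : k < n := ltn_trans lt_kj (ltn_ord j).
have psum_j1 : psum d j.-1 = 0.
  by apply/eqP; rewrite -leqn0 -psum_j leq_psum ?leq_pred.
rewrite [LHS](bigD1 (Ordinal lt_j1n)) // [RHS](bigD1 (Ordinal lt_kn)) //.
rewrite [nat_of_ord (Ordinal lt_j1n)]/= [nat_of_ord (Ordinal lt_kn)]/= fneg_j1 psum_j1.
by case/andP: conflict_k => -> ->.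
Qed.

Lemma psum_gt0 j : 0 < incr d 0 -> 0 < psum d j.
Proof. by rewrite -psum0 => /leq_trans; apply; apply: leq_psum. Qed.

Lemma prod_standard_signs :
  \prod_(j < n) ((0 < psum d j) * (~~ fneg j + ~~ fnn j)) =
  (0 < incr d 0) * (conflict_free * 2 ^ (\sum_(j < n) (0 < d j))).
Proof.
have [incr0 | incr0_gt0] := posnP (incr d 0).
  by rewrite (bigD1 (Ordinal n_gt0)) //= psum0 incr0.
rewrite mul1n -prod_free_signs; apply: eq_bigr => j _.
by rewrite psum_gt0 // mul1n.
Qed.

Lemma prod_strict_signs : \prod_(j < n) ((0 < psum d j) && ~~ fneg j) =
  (0 < incr d 0) * [forall j : 'I_n, ~~ fneg j].
Proof.
have [incr0 | incr0_gt0] := posnP (incr d 0).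
  by rewrite (bigD1 (Ordinal n_gt0)) //= psum0 incr0.
rewrite -[nat_of_bool true]/1 mul1n -prod_nat_of_bool.
by apply: eq_bigr => j _; rewrite psum_gt0.
Qed.

End Forced.

(** * Counting by blocks *)

Definition hits_all (D : nat -> nat) (B : seq (seq nat)) : bool :=
  all (has (fun x => 0 < D x)) B.

Definition block_count n m (w : nat -> nat) (B : seq (seq nat)) : nat :=
  \sum_(d : {ffun 'I_n -> 'I_m.+1})
     (\sum_(i < n) (d i : nat) <= m) * (w (\sum_(j < n) (0 < d j)) * hits_all (incr d) B).

Lemma hits_all_pairs (p : pred nat) D r :
  hits_all D [seq [:: i.-1; i] | i <- [seq i <- r | p i]] =
  all (fun i => p i ==> (0 < D i.-1) || (0 < D i)) r.
Proof. by rewrite /hits_all all_map all_filter; apply: eq_all => i /=; rewrite orbF. Qed.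

Lemma hits_all_singles (p : pred nat) D r :
  hits_all D [seq [:: i] | i <- [seq i <- r | p i]] = all (fun i => p i ==> (0 < D i)) r.
Proof. by rewrite /hits_all all_map all_filter; apply: eq_all => i /=; rewrite orbF. Qed.

Lemma forall_ord_succ n (P : pred nat) :
  [forall j : 'I_n, (j.+1 < n) ==> P j.+1] = all P (iota 1 n.-1).
Proof.
apply/forallP/allP => [P_succ i | P_iota j]; last first.
  by apply/implyP => lt_j1n; apply: P_iota; rewrite mem_iota; lia.
rewrite mem_iota => /andP[i_gt0 lt_in]; have lt_i1n : i.-1 < n by lia.
by have := P_succ (Ordinal lt_i1n); rewrite /= prednK // (_ : i < n) //; lia.
Qed.

Section Blocks.
Variables (n : nat) (s : 'S_n).

Definition is_peak (i : nat) : bool := (pv s i.-1 < pv s i) && (pv s i.+1 < pv s i).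
Definition is_desc (i : nat) : bool := pv s i.+1 < pv s i.

(* Increments are indexed from [0]: the block [[:: i.-1; i]] of the peak at
   position [i] is where [forced_neg] and [forced_nonneg] clash at [i.-1].
   The block [[:: 0]] stands for [d_0 > 0], i.e. no value is [0]. *)
Definition peak_blocks (r : seq nat) := [seq [:: i.-1; i] | i <- [seq i <- r | is_peak i]].
Definition lpk_blocks := peak_blocks (iota 1 n.-1).
Definition pk_blocks := [:: 0] :: peak_blocks (iota 2 (n - 2)).
Definition des_blocks := [:: 0] :: [seq [:: i] | i <- [seq i <- iota 1 n.-1 | is_desc i]].

Lemma is_descE i : 0 < i < n -> is_desc i = ~~ asc s i.
Proof.
case: i => [|i] // /andP[_ lt_i1n]; have lt_in : i < n by lia.
rewrite /is_desc /asc (pv_ord s (Ordinal lt_i1n)) (pv_ord s (Ordinal lt_in)) !ltnS.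
have : s (Ordinal lt_in) != s (Ordinal lt_i1n).
  by rewrite (inj_eq perm_inj) -val_eqE /= ltn_eqF.
by rewrite -val_eqE; case: ltngtP.
Qed.

Lemma is_peakE i : 0 < i < n -> is_peak i = asc s i.-1 && ~~ asc s i.
Proof. by move=> i_range; rewrite -is_descE // /asc prednK //; case/andP: i_range. Qed.

End Blocks.

Section BlockConditions.
Variables (n m : nat) (s : 'S_n).
Hypothesis n_gt0 : 0 < n.
Implicit Type d : {ffun 'I_n -> 'I_m.+1}.

Lemma conflict_freeE d : conflict_free s d = hits_all (incr d) (lpk_blocks s).
Proof.
rewrite /conflict_free /lpk_blocks /peak_blocks hits_all_pairs -forall_ord_succ.
apply: eq_forallb => j; rewrite /forced_neg /forced_nonneg.
case: (ltnP j.+1 n) => [lt_j1n | //=]; rewrite is_peakE /=; last lia.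
rewrite !eqn0Ngt; case: (asc s j); case: (asc s j.+1) => //=;
  by case: (0 < incr d j); case: (0 < incr d j.+1).
Qed.

Lemma hits_pk_blocks d :
  hits_all (incr d) (pk_blocks s) = (0 < incr d 0) && hits_all (incr d) (lpk_blocks s).
Proof.
rewrite /pk_blocks /lpk_blocks /= orbF; case: (posnP (incr d 0)) => //= incr0_gt0.
rewrite /peak_blocks !hits_all_pairs.
have [le_n1 | lt_1n] := leqP n 1.
  have -> : n - 2 = 0 by lia.
  by have -> : n.-1 = 0 by lia.
have -> : n.-1 = (n - 2).+1 by lia.
by rewrite /= incr0_gt0 implybT.
Qed.

Lemma hits_des_blocks d :
  hits_all (incr d) (des_blocks s) = (0 < incr d 0) && [forall j : 'I_n, ~~ forced_neg s d j].
Proof.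
rewrite /des_blocks /= orbF hits_all_singles -forall_ord_succ; congr andb.
apply: eq_forallb => j; rewrite /forced_neg.
case: (ltnP j.+1 n) => [lt_j1n | //=]; rewrite is_descE /=; last lia.
by rewrite eqn0Ngt; case: (asc s j.+1); case: (0 < incr d j.+1).
Qed.

Lemma Omega_block_count : Omega s m = block_count n m (expn 2) (lpk_blocks s).
Proof.
rewrite /Omega Omega_gen_prod; apply: eq_bigr => d _; congr (_ * _).
rewrite (eq_bigr (fun j : 'I_n =>
  ~~ forced_neg s d j + ((0 < psum d j) && ~~ forced_nonneg s d j))) => [|j _].
  by rewrite prod_lazy_signs // mulnC conflict_freeE.
rewrite /sign_ok /=.
by case: (forced_nonneg s d j); case: (forced_neg s d j); case: (0 < psum d j).
Qed.

Lemma Omega_star_block_count : Omega_star s m = block_count n m (expn 2) (pk_blocks s).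
Proof.
rewrite /Omega_star Omega_gen_prod; apply: eq_bigr => d _; congr (_ * _).
rewrite (eq_bigr (fun j : 'I_n =>
  (0 < psum d j) * (~~ forced_neg s d j + ~~ forced_nonneg s d j))) => [|j _].
  rewrite prod_standard_signs // hits_pk_blocks -conflict_freeE mulnA mulnC.
  by case: (0 < incr d 0); case: (conflict_free s d).
rewrite /sign_ok !signed_eq0 -lt0n.
by case: (forced_nonneg s d j); case: (forced_neg s d j); case: (0 < psum d j).
Qed.

Lemma Omega_plus_block_count : Omega_plus s m = block_count n m (fun=> 1) (des_blocks s).
Proof.
rewrite /Omega_plus Omega_gen_prod; apply: eq_bigr => d _; congr (_ * _).
rewrite (eq_bigr (fun j : 'I_n => ((0 < psum d j) && ~~ forced_neg s d j) : nat)) => [|j _].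
  by rewrite prod_strict_signs // hits_des_blocks mul1n; case: (0 < incr d 0); rewrite ?mul1n.
rewrite /sign_ok /= oppr_gt0 !ltz_nat ltn0 andbF.
by case: (forced_nonneg s d j); case: (forced_neg s d j); case: (0 < psum d j).
Qed.

End BlockConditions.

(** * Relabelling positions *)

Lemma nth_flatten_index T (x0 : T) (ss : seq (seq T)) l c : c < size (nth [::] ss l) ->
  nth x0 (flatten ss) (flatten_index (shape ss) l c) = nth x0 (nth [::] ss l) c.
Proof.
move=> lt_c; have lt_l : l < size ss.
  by rewrite ltnNge; apply: contraTN lt_c => le_sl; rewrite nth_default.
have lt_c' : c < nth 0 (shape ss) l by rewrite (nth_map [::]).
by rewrite nth_flatten flatten_indexKl // flatten_indexKr.
Qed.

Lemma bounded_uniq_size n (F : seq nat) : uniq F -> all (fun x => x < n) F -> size F <= n.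
Proof.
move=> uF ltF; rewrite -(size_iota 0 n); apply: uniq_leq_size => // x /(allP ltF).
by rewrite mem_iota.
Qed.

Section Relabel.
Variable n : nat.

Definition perm_nat (p : 'S_n) (x : nat) : nat := oapp (fun i => val (p i)) x (insub x).

Lemma incr_perm m (p : 'S_n) (d : {ffun 'I_n -> 'I_m.+1}) x :
  incr [ffun i => d (p i)] x = incr d (perm_nat p x).
Proof.
rewrite /perm_nat /incr; case: insubP => [i _ <- | /negbTE x_ge] /=.
  by rewrite ffunE valK.
by rewrite insubF.
Qed.

Definition complete_enum (F : seq nat) := F ++ [seq x <- iota 0 n | x \notin F].

Lemma perm_complete_enum F : uniq F -> all (fun x => x < n) F ->
  perm_eq (complete_enum F) (iota 0 n).
Proof.
move=> uF ltF; apply: uniq_perm; rewrite ?iota_uniq //.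
  rewrite cat_uniq uF filter_uniq ?iota_uniq // andbT /=.
  by apply/hasPn => x; rewrite mem_filter => /andP[].
move=> x; rewrite mem_cat mem_filter mem_iota add0n leq0n /=.
by case: (boolP (x \in F)) => //= xF; rewrite (allP ltF x xF).
Qed.

Lemma exists_perm_nth (L L' : seq nat) : perm_eq L (iota 0 n) -> perm_eq L' (iota 0 n) ->
  exists p : 'S_n, forall i, i < n -> perm_nat p (nth 0 L' i) = nth 0 L i.
Proof.
move=> pL pL'.
have uL : uniq L by rewrite (perm_uniq pL) iota_uniq.
have uL' : uniq L' by rewrite (perm_uniq pL') iota_uniq.
have sL : size L = n by rewrite (perm_size pL) size_iota.
have sL' : size L' = n by rewrite (perm_size pL') size_iota.
have memL' (x : 'I_n) : (x : nat) \in L' by rewrite (perm_mem pL') mem_iota add0n ltn_ord.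
have idx_lt (x : 'I_n) : index (x : nat) L' < size L.
  by rewrite sL -[X in _ < X]sL' index_mem.
have lt_f (x : 'I_n) : nth 0 L (index (x : nat) L') < n.
  suff : nth 0 L (index (x : nat) L') \in iota 0 n by rewrite mem_iota.
  by rewrite -(perm_mem pL) mem_nth.
pose f (x : 'I_n) := Ordinal (lt_f x).
have f_inj : injective f.
  move=> x y /(congr1 val) /= /eqP; rewrite nth_uniq // => /eqP fxy.
  by apply: ord_inj; rewrite -(nth_index 0 (memL' x)) fxy nth_index.
exists (perm f_inj) => i lt_in.
have lt_nth : nth 0 L' i < n.
  suff : nth 0 L' i \in iota 0 n by rewrite mem_iota.
  by rewrite -(perm_mem pL') mem_nth // sL'.
by rewrite /perm_nat insubT /= permE /= index_uniq // sL'.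
Qed.

End Relabel.

Lemma size_le_shape_prefix T (B B' : seq (seq T)) :
  take (size B) (shape B') = shape B -> size B <= size B'.
Proof. by move/(congr1 size); rewrite size_take_min /shape !size_map => /minn_idPl. Qed.

Definition block_family n (B : seq (seq nat)) : bool :=
  uniq (flatten B) && all (fun x => x < n) (flatten B).

Lemma exists_perm_blocks n (B B' : seq (seq nat)) :
  block_family n B -> block_family n B' ->
  take (size B) (shape B') = shape B ->
  exists p : 'S_n, forall l, l < size B -> map (perm_nat p) (nth [::] B' l) = nth [::] B l.
Proof.
move=> /andP[uB ltB] /andP[uB' ltB'] shapeB.
(* Match the enumerations "blocks of [B'], then the other positions" and
   "blocks of [B], then the other positions" entry by entry; as the shapes
   agree, the [l]-th block of [B'] is sent onto the [l]-th block of [B]. *)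
have [p pE] := exists_perm_nth (perm_complete_enum uB ltB) (perm_complete_enum uB' ltB').
have nth_enum F i : i < size F -> nth 0 (complete_enum n F) i = nth 0 F i.
  by move=> lt_iF; rewrite nth_cat lt_iF.
exists p => l lt_lB; have lt_lB' := leq_trans lt_lB (size_le_shape_prefix shapeB).
have shape_l : nth 0 (shape B') l = nth 0 (shape B) l by rewrite -shapeB nth_take.
have index_l c : flatten_index (shape B') l c = flatten_index (shape B) l c.
  by rewrite /flatten_index -shapeB take_takel // ltnW.
apply: (@eq_from_nth _ 0) => [|c]; rewrite size_map.
  by move: shape_l; rewrite !(nth_map [::]).
move=> lt_c; have lt_c' : c < nth 0 (shape B') l by rewrite (nth_map [::]).
have lt_cB : c < size (nth [::] B l) by rewrite -(nth_map [::] 0 size) // -shape_l.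
rewrite (nth_map 0) // -(nth_flatten_index 0 lt_c) -(nth_flatten_index 0 lt_cB) index_l.
have lt_iB' := flatten_indexP lt_c'.
have lt_iB := flatten_indexP (leq_trans lt_c' (eq_leq shape_l)).
rewrite index_l -size_flatten in lt_iB'; rewrite -size_flatten in lt_iB.
rewrite -(nth_enum (flatten B')) // -(nth_enum (flatten B)) // pE //.
exact: leq_trans lt_iB (bounded_uniq_size uB ltB).
Qed.

Lemma hits_all_relabel n m (p : 'S_n) (d : {ffun 'I_n -> 'I_m.+1}) (B B' : seq (seq nat)) :
  size B <= size B' ->
  (forall l, l < size B -> map (perm_nat p) (nth [::] B' l) = nth [::] B l) ->
  hits_all (incr [ffun i => d (p i)]) B' -> hits_all (incr d) B.
Proof.
move=> le_BB' pB /allP hits_B'; apply/(all_nthP [::]) => l lt_lB.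
have /hasP[x x_in x_pos] := hits_B' _ (mem_nth [::] (leq_trans lt_lB le_BB')).
by apply/hasP; exists (perm_nat p x); rewrite -?pB ?map_f // -incr_perm.
Qed.

Lemma block_count_mono n m w (B B' : seq (seq nat)) :
  block_family n B -> block_family n B' ->
  take (size B) (shape B') = shape B ->
  block_count n m w B' <= block_count n m w B.
Proof.
move=> famB famB' shapeB; have [p pB] := exists_perm_blocks famB famB' shapeB.
pose relabel (d : {ffun 'I_n -> 'I_m.+1}) := [ffun i => d (p i)].
have relabel_inj : injective relabel.
  by move=> d1 d2 /ffunP d12; apply/ffunP => x; have := d12 (p^-1 x)%g; rewrite !ffunE permKV.
rewrite /block_count (reindex_inj relabel_inj); apply: leq_sum => d _.
have sum_relabel (F : 'I_m.+1 -> nat) : \sum_(i < n) F (relabel d i) = \sum_(i < n) F (d i).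
  by rewrite [RHS](reindex_inj (@perm_inj _ p)); apply: eq_bigr => i _; rewrite ffunE.
rewrite (sum_relabel (fun v => v : nat)) (sum_relabel (fun v => (0 < v) : nat)).
rewrite leq_mul // leq_mul //; case: (boolP (hits_all _ B')) => // hits_B'.
by rewrite (hits_all_relabel (size_le_shape_prefix shapeB) pB hits_B').
Qed.

(** * Disjointness of the blocks *)

Definition apart (x y : nat) : bool := x.+1 < y.

Lemma apart_trans : transitive apart.
Proof. by rewrite /apart => y x z; lia. Qed.

Lemma sorted_apart_filter (p : pred nat) a k :
  (forall x, p x -> ~~ p x.+1) -> sorted apart [seq i <- iota a k | p i].
Proof.
move=> p_isolated; elim: k a => [|k IHk] a //=.
case: ifP => [pa | _] //=; rewrite (path_sortedE apart_trans) IHk andbT.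
apply/allP => y; rewrite mem_filter mem_iota => /andP[py /andP[lt_ay _]].
rewrite /apart ltn_neqAle lt_ay andbT; apply: contraTneq py => <-.
exact: p_isolated.
Qed.

Lemma path_pairs x P : path apart x P -> path ltn x (flatten [seq [:: i.-1; i] | i <- P]).
Proof.
elim: P x => [|y P IHP] x //= /andP[x_apart_y path_y].
by rewrite IHP // andbT; move: x_apart_y; rewrite /apart; lia.
Qed.

Lemma sorted_pairs P : sorted apart P -> all (leq 1) P ->
  sorted ltn (flatten [seq [:: i.-1; i] | i <- P]).
Proof.
case: P => [|y P] //= path_y /andP[y_gt0 _].
by rewrite path_pairs // andbT; lia.
Qed.

Section Families.
Variable n : nat.
Implicit Type s : 'S_n.

Lemma no_adjacent_peaks s i : is_peak s i -> ~~ is_peak s i.+1.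
Proof. by case/andP=> _ lt_i; apply/negP => /andP[]; rewrite -[i.+1.-1]/i; lia. Qed.

Lemma mem_flatten_peak_blocks s a k x : x \in flatten (peak_blocks s (iota a k)) ->
  [/\ 0 < k, a.-1 <= x & x < a + k].
Proof.
case/flattenP => b /mapP[i]; rewrite mem_filter mem_iota => /andP[_ /andP[le_ai lt_i]] -> /=.
by rewrite !inE => /orP[] /eqP ->; split; lia.
Qed.

Lemma lpk_blocks_family s : block_family n (lpk_blocks s).
Proof.
apply/andP; split.
  apply: (sorted_uniq ltn_trans ltnn); apply: sorted_pairs.
    exact/sorted_apart_filter/no_adjacent_peaks.
  by apply/allP => i; rewrite mem_filter mem_iota => /and3P[].
by apply/allP => x /mem_flatten_peak_blocks[]; lia.
Qed.

Hypothesis n_gt0 : 0 < n.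

Lemma pk_blocks_family s : block_family n (pk_blocks s).
Proof.
apply/andP; split.
  apply: (sorted_uniq ltn_trans ltnn); apply: path_pairs.
  rewrite (path_sortedE apart_trans) sorted_apart_filter ?andbT //; last exact: no_adjacent_peaks.
  by apply/allP => i; rewrite mem_filter mem_iota => /and3P[].
by apply/allP => x; rewrite inE => /predU1P[-> // | /mem_flatten_peak_blocks[]]; lia.
Qed.

Lemma des_blocks_family s : block_family n (des_blocks s).
Proof.
rewrite /block_family /des_blocks [flatten _]/= flatten_seq1; apply/andP; split.
  apply: (sorted_uniq ltn_trans ltnn) => /=.
  rewrite (path_sortedE ltn_trans) sorted_filter ?iota_ltn_sorted ?andbT //; last exact: ltn_trans.
  by apply/allP => i; rewrite mem_filter mem_iota => /and3P[].
rewrite /= n_gt0 /=; apply/allP => i; rewrite mem_filter mem_iota => /and3P[]; lia.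
Qed.

Lemma shape_peak_blocks s r : shape (peak_blocks s r) = nseq (count (is_peak s) r) 2.
Proof.
by rewrite /shape -map_comp -size_filter; elim: [seq i <- r | is_peak s i] => //= i P ->.
Qed.

Lemma shape_lpk_blocks s : shape (lpk_blocks s) = nseq (lpk s) 2.
Proof. exact: shape_peak_blocks. Qed.

Lemma shape_pk_blocks s : shape (pk_blocks s) = 1 :: nseq (pk s) 2.
Proof. by rewrite /= shape_peak_blocks. Qed.

Lemma shape_des_blocks s : shape (des_blocks s) = nseq (des s).+1 1.
Proof.
rewrite /shape /= -map_comp -[des s]size_filter.
by congr cons; elim: [seq i <- _ | is_desc s i] => //= i P ->.
Qed.

End Families.

Lemma sumn_shape_le n B : block_family n B -> sumn (shape B) <= n.
Proof. by case/andP=> uB ltB; rewrite -size_flatten bounded_uniq_size. Qed.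

Lemma size_from_shape T (B : seq (seq T)) k c : shape B = nseq k c -> size B = k.
Proof. by move/(congr1 size); rewrite size_map size_nseq. Qed.

Section Statistics.
Variables (n m : nat).
Hypothesis n_gt0 : 0 < n.
Implicit Types s : 'S_n.

Lemma Omega_antimono s s' : lpk s <= lpk s' -> Omega s' m <= Omega s m.
Proof.
move=> le_ss'; rewrite !Omega_block_count //.
apply: block_count_mono; rewrite ?lpk_blocks_family //.
by rewrite (size_from_shape (shape_lpk_blocks s)) !shape_lpk_blocks take_nseq.
Qed.

Lemma Omega_star_antimono s s' : pk s <= pk s' -> Omega_star s' m <= Omega_star s m.
Proof.
move=> le_ss'; rewrite !Omega_star_block_count //.
apply: block_count_mono; rewrite ?pk_blocks_family //.
have -> : size (pk_blocks s) = (pk s).+1 by rewrite /= size_map size_filter.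
by rewrite !shape_pk_blocks /= take_nseq.
Qed.

Lemma Omega_plus_antimono s s' : des s <= des s' -> Omega_plus s' m <= Omega_plus s m.
Proof.
move=> le_ss'; rewrite !Omega_plus_block_count //.
apply: block_count_mono; rewrite ?des_blocks_family //.
by rewrite (size_from_shape (shape_des_blocks s)) !shape_des_blocks take_nseq.
Qed.

Lemma lpk_le s : lpk s <= n./2.
Proof.
have := sumn_shape_le (lpk_blocks_family s).
by rewrite shape_lpk_blocks sumn_nseq geq_half_double -mul2n.
Qed.

Lemma pk_le s : pk s <= n.-1./2.
Proof.
have := sumn_shape_le (pk_blocks_family n_gt0 s).
by rewrite shape_pk_blocks /= sumn_nseq geq_half_double -mul2n; lia.
Qed.

Lemma des_le s : des s <= n.-1.
Proof. by rewrite /des (leq_trans (count_size _ _)) // size_iota. Qed.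

End Statistics.

(** * Extremal values *)

Local Open Scope ring_scope.

Section BigMax.
Variables (R : realDomainType) (I : finType).

Lemma bigmax_attained (x0 M : R) (f : I -> R) :
  x0 <= M -> (forall i, f i <= M) -> (exists i, f i = M) -> \big[Num.max/x0]_i f i = M.
Proof.
move=> le_x0M le_fM [i fiM]; apply/le_anti/andP; split.
  by apply: (big_ind (fun x => x <= M)) => // x y; rewrite ge_max => -> ->.
by rewrite (bigD1 i) //= le_max fiM lexx.
Qed.

Variables (f : I -> R) (i0 ia ib : I).
Hypothesis f_range : forall i, f ia <= f i <= f ib.

Lemma bigmax_range : \big[Num.max/f i0]_i f i = Num.max (f ia) (f ib).
Proof.
have le_ab : f ia <= f ib by case/andP: (f_range ia) => _ ->.
rewrite (max_idPr le_ab); apply: bigmax_attained => [|i|]; last by exists ib.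
  by case/andP: (f_range i0).
by case/andP: (f_range i).
Qed.

Lemma bigmax_norm_range : \big[Num.max/`|f i0|]_i `|f i| = Num.max `|f ia| `|f ib|.
Proof.
have norm_le i : `|f i| <= Num.max `|f ia| `|f ib|.
  case/andP: (f_range i) => le_ai le_ib; rewrite ler_norml; apply/andP; split.
    rewrite lerNl (le_trans (_ : _ <= - f ia)) ?lerN2 //.
    by rewrite le_max ler_normr lexx !orbT.
  by rewrite (le_trans le_ib) // le_max ler_norm orbT.
apply: bigmax_attained => //.
by case: (leP `|f ia| `|f ib|) => _; [exists ib | exists ia].
Qed.

End BigMax.

Lemma oneBM_range (R : realDomainType) (c a x b : R) :
  0 <= c -> a <= x <= b -> 1 - c * b <= 1 - c * x <= 1 - c * a.
Proof. by move=> c_ge0 /andP[le_ax le_xb]; rewrite !lerD2l !lerN2 !ler_wpM2l. Qed.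

Lemma shuffle_dist_antimono k m n (s s' : 'S_n) : (0 < n)%N ->
  (shelf_stat k s <= shelf_stat k s')%N -> shuffle_dist k m s' <= shuffle_dist k m s.
Proof.
move=> n_gt0; case: k => /= le_ss'; rewrite ler_wpM2r ?invr_ge0 ?ler0n // ler_nat.
- exact: Omega_antimono.
- exact: Omega_star_antimono.
- exact: Omega_plus_antimono.
Qed.

Lemma shelf_stat_le_kmax k n (s : 'S_n) : (0 < n)%N -> (shelf_stat k s <= kmax k n)%N.
Proof. by case: k => n_gt0 /=; rewrite ?lpk_le ?pk_le ?des_le. Qed.

Theorem mainTheorem7 (n m : nat) (k : shelf) (s0 s1 : 'S_n) :
  (0 < n)%N -> (0 < m)%N ->
  shelf_stat k s0 = 0%N -> shelf_stat k s1 = kmax k n ->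
  sep (shuffle_dist k m (n:=n)) =
    Num.max (1 - (n`!)%:R * shuffle_dist k m s0)
            (1 - (n`!)%:R * shuffle_dist k m s1)
  /\
  dist_inf (shuffle_dist k m (n:=n)) =
    Num.max `|1 - (n`!)%:R * shuffle_dist k m s0|
            `|1 - (n`!)%:R * shuffle_dist k m s1|.
Proof.
move=> n_gt0 _ stat_s0 stat_s1.
have P_range (s : 'S_n) : shuffle_dist k m s1 <= shuffle_dist k m s <= shuffle_dist k m s0.
  by rewrite !shuffle_dist_antimono // ?stat_s0 ?stat_s1 ?shelf_stat_le_kmax.
have x_range (s : 'S_n) : 1 - (n`!)%:R * shuffle_dist k m s0 <= 1 - (n`!)%:R * shuffle_dist k m s
                          <= 1 - (n`!)%:R * shuffle_dist k m s1.
  exact/oneBM_range/P_range.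
split; [exact: bigmax_range | exact: bigmax_norm_range].
Qed.
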